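(* The Only Upper Bounded Days On Days Off Scheduling Problem (UDODOSP) can be decided in $\mathcal{O}(D^2)$ time.
   Context: An instance of the Days On Days Off Scheduling Problem (DODOSP) consists of integers $D\ge 1$ (days), $N\ge 1$ (workers), bounds $l_w,u_w,l_o,u_o,U_w,U_o\in\mathbb{N}$, and for each day $d\in\{1,\dots,D\}$ integers $0\le r_l^d\le r_u^d\le N$. A schedule is a map $f:\{n_1,\dots,n_N\}\times\{1,\dots,D\}\to\{\mathrm{ON},\mathrm{OFF}\}$ (not cyclic). A work period (resp. off period) of a worker is an inclusion-wise maximal set of consecutive days on which the worker is ON (resp. OFF). A schedule is feasible if on every day $d$ the number of workers that are ON lies in $[r_l^d,r_u^d]$, every work period has length between $l_w$ and $u_w$, every off period has length between $l_o$ and $u_o$, every worker is ON on at most $U_w$ days and OFF on at most $U_o$ days. The decision problem asks whether a feasible schedule exists. The UDODOSP is the DODOSP restricted to instances with $l_w=l_o=1$. *)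

From Stdlib Require Import Arith List Bool.
Import ListNotations.

Record dodosp_instance := {
  D : nat;  N : nat;
  l_w : nat; u_w : nat; l_o : nat; u_o : nat; U_w : nat; U_o : nat;
  r_l : nat -> nat;  (* lower bound on #workers ON, day d (1 <= d <= D) *)
  r_u : nat -> nat   (* upper bound on #workers ON, day d (1 <= d <= D) *)
}.

Definition valid_instance (I : dodosp_instance) : Prop :=
  1 <= D I /\ 1 <= N I /\
  forall d, 1 <= d <= D I -> r_l I d <= r_u I d /\ r_u I d <= N I.

Definition udodosp_instance (I : dodosp_instance) : Prop :=
  valid_instance I /\ l_w I = 1 /\ l_o I = 1.

(** A schedule: [f i d = true] means worker [i] (0 <= i < N) is ON on day
    [d] (1 <= d <= D); values outside this range are irrelevant. *)
Definition schedule := nat -> nat -> bool.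

Definition num_on (I : dodosp_instance) (f : schedule) (d : nat) : nat :=
  length (filter (fun i => f i d) (seq 0 (N I))).

Definition periods_ok (I : dodosp_instance) (f : schedule) (i : nat)
    (s : bool) (lo hi : nat) : Prop :=
  forall a b, 1 <= a -> a <= b -> b <= D I ->
    (forall x, a <= x <= b -> f i x = s) ->
    (a = 1 \/ f i (a - 1) <> s) ->
    (b = D I \/ f i (b + 1) <> s) ->
    lo <= b - a + 1 <= hi.

Definition feasible_schedule (I : dodosp_instance) (f : schedule) : Prop :=
  (forall d, 1 <= d <= D I -> r_l I d <= num_on I f d <= r_u I d) /\
  (forall i, i < N I ->
     periods_ok I f i true (l_w I) (u_w I) /\
     periods_ok I f i false (l_o I) (u_o I) /\
     length (filter (fun d => f i d) (seq 1 (D I))) <= U_w I /\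
     length (filter (fun d => negb (f i d)) (seq 1 (D I))) <= U_o I).

Definition feasible (I : dodosp_instance) : Prop :=
  exists f : schedule, feasible_schedule I f.

(** * A unit-cost RAM (natural-number registers, indirect addressing,
      addition, truncated subtraction, zero test; every instruction costs 1). *)
Inductive instr :=
| IConst (r n : nat)
| IAdd (r a b : nat)
| ISub (r a b : nat)        (* m[r] := m[a] - m[b] (truncated) *)
| ILoad (r a : nat)
| IStore (a b : nat)
| IJz (a l : nat)
| IJmp (l : nat)
| IHalt.

Definition program := list instr.
Definition memory := nat -> nat.
Definition state := (nat * memory)%type.

Definition upd (m : memory) (r v : nat) : memory :=
  fun x => if Nat.eqb x r then v else m x.

Definition step (P : program) (s : state) : option state :=
  let (pc, m) := s in
  match nth_error P pc with
  | None | Some IHalt => None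
  | Some (IConst r n) => Some (S pc, upd m r n)
  | Some (IAdd r a b) => Some (S pc, upd m r (m a + m b))
  | Some (ISub r a b) => Some (S pc, upd m r (m a - m b))
  | Some (ILoad r a) => Some (S pc, upd m r (m (m a)))
  | Some (IStore a b) => Some (S pc, upd m (m a) (m b))
  | Some (IJz a l) => Some (if Nat.eqb (m a) 0 then l else S pc, m)
  | Some (IJmp l) => Some (l, m)
  end.

(** [run P t s = Some m] iff the machine started in [s] halts after at most
    [t] executed instructions, with final memory [m]. *)
Fixpoint run (P : program) (t : nat) (s : state) : option memory :=
  match step P s with
  | None => Some (snd s)
  | Some s' => match t with 0 => None | S t' => run P t' s' end
  end.

(** Input encoding: m[0..7] = D, N, l_w, u_w, l_o, u_o, U_w, U_o;
    m[10 + 2d] = r_l^d and m[11 + 2d] = r_u^d for 1 <= d <= D;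
    all other cells 0. *)
Definition init_mem (I : dodosp_instance) : memory := fun x =>
  match x with
  | 0 => D I | 1 => N I | 2 => l_w I | 3 => u_w I
  | 4 => l_o I | 5 => u_o I | 6 => U_w I | 7 => U_o I
  | _ => if (12 <=? x) && (x <=? 11 + 2 * D I) then
           (if Nat.even x then r_l I ((x - 10) / 2) else r_u I ((x - 11) / 2))
         else 0
  end.

Definition accepts (m : memory) : Prop := m 0 <> 0.

(* Let y d count the worker-days on days 1..d.  For UDODOSP only the upper bounds on
   period lengths matter, and a feasible schedule makes y satisfy difference constraints:
   r_l d <= y d - y (d-1) <= r_u d, any u_w + 1 consecutive days carry at most u_w * N
   worker-days, any u_o + 1 consecutive days at least N, and the total lies between
   (D - U_o) * N and U_w * N.  Conversely, from such a y, giving the worker-days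
   y (d-1), ..., y d - 1 of day d to the workers they are congruent to modulo N yields a
   feasible schedule.
   The system has D + 1 unknowns and O(D) constraints.  Relaxing all constraints in
   rounds, starting from 0, never overshoots the least solution, and every round brings a
   further unknown to its least value unless all of them already have it; so the system
   is solvable iff round D + 1 changes nothing.  A RAM program doing this takes O(D^2)
   steps. *)

From Stdlib Require Import Arith List Lia Bool ClassicalEpsilon.
Import ListNotations.

Fixpoint nsum (g : nat -> nat) (a n : nat) : nat :=
  match n with 0 => 0 | S n => nsum g a n + g (a + n) end.

Lemma nsum_ext g h a n :
  (forall k, a <= k < a + n -> g k = h k) -> nsum g a n = nsum h a n.
Proof.
  induction n as [|n IH]; intros E; simpl; auto.
  rewrite IH by (intros; apply E; lia). rewrite E by lia. reflexivity.
Qed.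

Lemma nsum_le g h a n :
  (forall k, a <= k < a + n -> g k <= h k) -> nsum g a n <= nsum h a n.
Proof.
  induction n as [|n IH]; intros E; simpl; auto.
  assert (g (a + n) <= h (a + n)) by (apply E; lia).
  assert (nsum g a n <= nsum h a n) by (apply IH; intros; apply E; lia). lia.
Qed.

Lemma nsum_const c a n : nsum (fun _ => c) a n = n * c.
Proof. induction n; simpl; lia. Qed.

Lemma nsum_add g h a n : nsum (fun k => g k + h k) a n = nsum g a n + nsum h a n.
Proof. induction n; simpl; lia. Qed.

Lemma nsum_sub g h a n :
  (forall k, h k <= g k) -> nsum (fun k => g k - h k) a n = nsum g a n - nsum h a n.
Proof.
  intros Hle. induction n as [|n IH]; simpl; auto.
  assert (nsum h a n <= nsum g a n) by (apply nsum_le; auto).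
  specialize (Hle (a + n)). lia.
Qed.

Lemma nsum_split g a n n' : nsum g a (n + n') = nsum g a n + nsum g (a + n) n'.
Proof.
  induction n' as [|n' IH]; simpl; [rewrite Nat.add_0_r; lia|].
  rewrite Nat.add_succ_r. simpl. rewrite IH, (Nat.add_assoc a n n'). lia.
Qed.

Lemma nsum_comm (g : nat -> nat -> nat) a n b n' :
  nsum (fun k => nsum (g k) b n') a n = nsum (fun l => nsum (fun k => g k l) a n) b n'.
Proof.
  induction n as [|n IH]; simpl.
  - rewrite nsum_const. lia.
  - rewrite IH, <- nsum_add. reflexivity.
Qed.

Lemma length_filter_seq (p : nat -> bool) a n :
  length (filter p (seq a n)) = nsum (fun k => Nat.b2n (p k)) a n.
Proof.
  induction n as [|n IH]; auto.
  rewrite seq_S, filter_app, length_app, IH. simpl.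
  destruct (p (a + n)); simpl; lia.
Qed.

Section Counting.
Variable p : nat -> bool.

Lemma nsum_b2n_le a n : nsum (fun k => Nat.b2n (p k)) a n <= n.
Proof. induction n; simpl; auto. destruct (p (a + n)); simpl; lia. Qed.

Lemma nsum_b2n_full a n :
  nsum (fun k => Nat.b2n (p k)) a n = n -> forall k, a <= k < a + n -> p k = true.
Proof.
  induction n as [|n IH]; simpl; intros H k Hk; [lia|].
  pose proof (nsum_b2n_le a n).
  destruct (p (a + n)) eqn:E; simpl in H; [|lia].
  destruct (Nat.eq_dec k (a + n)); [subst; auto|]. apply IH; lia.
Qed.

Lemma nsum_b2n_zero a n :
  nsum (fun k => Nat.b2n (p k)) a n = 0 -> forall k, a <= k < a + n -> p k = false.
Proof.
  induction n as [|n IH]; simpl; intros H k Hk; [lia|].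
  destruct (p (a + n)) eqn:E; simpl in H; [lia|].
  destruct (Nat.eq_dec k (a + n)); [subst; auto|]. apply IH; lia.
Qed.

Lemma nsum_b2n_all a n :
  (forall k, a <= k < a + n -> p k = true) -> nsum (fun k => Nat.b2n (p k)) a n = n.
Proof.
  intros H. rewrite (nsum_ext _ (fun _ => 1)), nsum_const by (intros k Hk; rewrite H; auto). lia.
Qed.

Lemma nsum_b2n_none a n :
  (forall k, a <= k < a + n -> p k = false) -> nsum (fun k => Nat.b2n (p k)) a n = 0.
Proof.
  intros H. rewrite (nsum_ext _ (fun _ => 0)), nsum_const by (intros k Hk; rewrite H; auto). lia.
Qed.

Lemma nsum_b2n_negb a n :
  nsum (fun k => Nat.b2n (p k)) a n + nsum (fun k => Nat.b2n (negb (p k))) a n = n.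
Proof. induction n; simpl; auto. destruct (p (a + n)); simpl; lia. Qed.

End Counting.

Lemma nsum_b2n_lt (p q : nat -> bool) a n :
  (forall k, a <= k < a + n -> p k = true -> q k = true) ->
  (exists k, a <= k < a + n /\ p k = false /\ q k = true) ->
  nsum (fun k => Nat.b2n (p k)) a n < nsum (fun k => Nat.b2n (q k)) a n.
Proof.
  induction n as [|n IH]; intros Hpq [k [Hk [Hp Hq]]]; [lia|]. simpl.
  assert (Hle : nsum (fun k => Nat.b2n (p k)) a n <= nsum (fun k => Nat.b2n (q k)) a n).
  { apply nsum_le. intros l Hl. specialize (Hpq l ltac:(lia)).
    destruct (p l), (q l); simpl; auto. discriminate (Hpq eq_refl). }
  destruct (Nat.eq_dec k (a + n)) as [->|Hne].
  - rewrite Hp, Hq. simpl. lia.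
  - assert (IHlt : nsum (fun k => Nat.b2n (p k)) a n < nsum (fun k => Nat.b2n (q k)) a n).
    { apply IH; [intros l Hl; apply Hpq; lia | exists k; split; [lia | auto]]. }
    specialize (Hpq (a + n) ltac:(lia)).
    destruct (p (a + n)), (q (a + n)); simpl; lia.
Qed.

Lemma nsum_b2n_eqb_one i n : i < n -> nsum (fun k => Nat.b2n (k =? i)) 0 n = 1.
Proof.
  intros Hi. replace n with (S i + (n - S i)) by lia.
  rewrite nsum_split, (nsum_b2n_none _ (0 + S i)); simpl.
  - rewrite Nat.eqb_refl, nsum_b2n_none; [reflexivity|].
    intros k Hk. apply Nat.eqb_neq. lia.
  - intros k Hk. apply Nat.eqb_neq. lia.
Qed.

Section Residues.
Variable n : nat.
Hypothesis n_pos : 0 < n.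

Definition residues (i x : nat) : nat := nsum (fun k => Nat.b2n (k mod n =? i)) 0 x.

Lemma residues_mono i x y : x <= y -> residues i x <= residues i y.
Proof.
  intros Hxy. unfold residues. replace y with (x + (y - x)) by lia.
  rewrite nsum_split. lia.
Qed.

Lemma residues_add_period i x : i < n -> residues i (x + n) = residues i x + 1.
Proof.
  intros Hi. induction x as [|x IH].
  - unfold residues. simpl. rewrite <- (nsum_b2n_eqb_one i n Hi).
    apply nsum_ext. intros k Hk. rewrite Nat.mod_small by lia. reflexivity.
  - unfold residues in *. simpl. rewrite IH.
    replace ((x + n) mod n) with (x mod n); [lia|].
    rewrite <- (Nat.Div0.mod_add x 1 n). f_equal. lia.
Qed.

Lemma residues_le_add_mul i x y b :
  i < n -> x <= y <= x + b * n -> residues i y <= residues i x + b.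
Proof.
  intros Hi. revert x. induction b as [|b IH]; intros x Hxy.
  - replace y with x by lia. lia.
  - destruct (Nat.le_gt_cases y (x + n)).
    + pose proof (residues_mono i y (x + n) ltac:(lia)) as Hle.
      rewrite residues_add_period in Hle by auto. lia.
    + specialize (IH (x + n) ltac:(simpl in *; lia)).
      rewrite residues_add_period in IH by auto. lia.
Qed.

Lemma residues_ge_add_mul i x y a :
  i < n -> x + a * n <= y -> residues i x + a <= residues i y.
Proof.
  intros Hi. revert x. induction a as [|a IH]; intros x Hxy.
  - rewrite Nat.add_0_r. apply residues_mono. lia.
  - specialize (IH (x + n) ltac:(simpl in *; lia)).
    rewrite residues_add_period in IH by auto. lia.
Qed.

Lemma nsum_residues x : nsum (fun i => residues i x) 0 n = x.
Proof.
  induction x as [|x IH].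
  - rewrite (nsum_ext _ (fun _ => 0)), nsum_const; auto.
  - unfold residues in *. simpl.
    rewrite (nsum_ext _ (fun i => nsum (fun k => Nat.b2n (k mod n =? i)) 0 x
                                   + Nat.b2n (i =? x mod n))).
    + rewrite nsum_add, IH, nsum_b2n_eqb_one; [lia|]. apply Nat.mod_upper_bound. lia.
    + intros i _. rewrite Nat.eqb_sym. reflexivity.
Qed.

End Residues.

(** * The cumulative workload system *)

(* The minima with [D I] change nothing (a window of u_w + 1 days needs u_w < D, and nobody
   works more than D days) but keep the products computable in O(D) steps. *)
Definition window_work_cap (I : dodosp_instance) := Nat.min (u_w I) (D I) * N I.
Definition total_work_min (I : dodosp_instance) := (D I - U_o I) * N I.
Definition total_work_max (I : dodosp_instance) := Nat.min (U_w I) (D I) * N I.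

Definition workload_system (I : dodosp_instance) (y : nat -> nat) : Prop :=
  (forall d, 1 <= d <= D I -> y (d - 1) + r_l I d <= y d <= y (d - 1) + r_u I d) /\
  (forall j, j + u_w I + 1 <= D I -> y (j + u_w I + 1) <= y j + window_work_cap I) /\
  (forall j, j + u_o I + 1 <= D I -> y j + N I <= y (j + u_o I + 1)) /\
  y 0 + total_work_min I <= y (D I) <= y 0 + total_work_max I.

Section Runs.
Variables (h : nat -> bool) (s : bool).

Lemma run_extend_left p q : 1 <= p -> (forall x, p <= x <= q -> h x = s) ->
  exists a, 1 <= a <= p /\ (forall x, a <= x <= q -> h x = s) /\ (a = 1 \/ h (a - 1) <> s).
Proof.
  induction p as [|p IH]; intros Hp Hrun; [lia|].
  destruct (Nat.eq_dec p 0) as [->|Hp0]; [exists 1; auto|].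
  destruct (Bool.bool_dec (h p) s) as [Hs|Hs].
  - destruct IH as [a [Ha [Hrun' Hmax]]]; [lia| |exists a; split; [lia|auto]].
    intros x Hx. destruct (Nat.eq_dec x p) as [->|]; auto. apply Hrun. lia.
  - exists (S p). split; [lia|]. split; auto. right. simpl. rewrite Nat.sub_0_r. auto.
Qed.

Lemma run_extend_right p q b0 : q <= b0 -> (forall x, p <= x <= q -> h x = s) ->
  exists b, q <= b <= b0 /\ (forall x, p <= x <= b -> h x = s) /\ (b = b0 \/ h (b + 1) <> s).
Proof.
  remember (b0 - q) as k eqn:Hk. revert q Hk.
  induction k as [|k IH]; intros q Hk Hq Hrun.
  - exists q. split; [lia|split; [auto|left; lia]].
  - destruct (Bool.bool_dec (h (q + 1)) s) as [Hs|Hs].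
    + destruct (IH (q + 1)) as [b [Hb [Hrun' Hmax]]]; try lia.
      * intros x Hx. destruct (Nat.eq_dec x (q + 1)) as [->|]; auto. apply Hrun. lia.
      * exists b. split; [lia|auto].
    + exists q. split; [lia|auto].
Qed.

End Runs.

Lemma periods_ok_no_long_run I f i s lo hi p :
  periods_ok I f i s lo hi -> 1 <= p -> p + hi <= D I ->
  ~ (forall x, p <= x <= p + hi -> f i x = s).
Proof.
  intros Hper Hp Hle Hrun.
  destruct (run_extend_left (f i) s p (p + hi) Hp Hrun) as [a [Ha [Hrun' Hleft]]].
  destruct (run_extend_right (f i) s a (p + hi) (D I) Hle Hrun') as [b [Hb [Hrun'' Hright]]].
  specialize (Hper a b ltac:(lia) ltac:(lia) ltac:(lia) Hrun'' Hleft Hright). lia.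
Qed.

Definition cumulative_work (I : dodosp_instance) (f : schedule) (d : nat) : nat :=
  nsum (num_on I f) 1 d.

Lemma cumulative_work_window I f j n :
  cumulative_work I f (j + n) =
  cumulative_work I f j + nsum (fun i => nsum (fun d => Nat.b2n (f i d)) (j + 1) n) 0 (N I).
Proof.
  unfold cumulative_work. rewrite nsum_split, <- nsum_comm. f_equal.
  rewrite Nat.add_comm. apply nsum_ext. intros d _.
  unfold num_on. apply length_filter_seq.
Qed.

Section FeasibleSchedule.
Variables (I : dodosp_instance) (f : schedule).
Hypothesis f_feasible : feasible_schedule I f.

Lemma work_days_in_window_le i j :
  i < N I -> j + u_w I + 1 <= D I ->
  nsum (fun d => Nat.b2n (f i d)) (j + 1) (u_w I + 1) <= u_w I.
Proof.
  intros Hi Hj. pose proof (nsum_b2n_le (f i) (j + 1) (u_w I + 1)).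
  destruct (Nat.eq_dec (nsum (fun d => Nat.b2n (f i d)) (j + 1) (u_w I + 1)) (u_w I + 1))
    as [Hall|]; [|lia].
  exfalso. apply (periods_ok_no_long_run I f i true (l_w I) (u_w I) (j + 1)); try lia.
  - apply (proj2 f_feasible i Hi).
  - intros x Hx. apply (nsum_b2n_full _ _ _ Hall). lia.
Qed.

Lemma work_days_in_window_pos i j :
  i < N I -> j + u_o I + 1 <= D I ->
  1 <= nsum (fun d => Nat.b2n (f i d)) (j + 1) (u_o I + 1).
Proof.
  intros Hi Hj.
  destruct (Nat.eq_dec (nsum (fun d => Nat.b2n (f i d)) (j + 1) (u_o I + 1)) 0)
    as [Hnone|]; [|lia].
  exfalso. apply (periods_ok_no_long_run I f i false (l_o I) (u_o I) (j + 1)); try lia.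
  - apply (proj2 f_feasible i Hi).
  - intros x Hx. apply (nsum_b2n_zero _ _ _ Hnone). lia.
Qed.

Lemma work_days_total_bounds i :
  i < N I ->
  D I - U_o I <= nsum (fun d => Nat.b2n (f i d)) 1 (D I) <= Nat.min (U_w I) (D I).
Proof.
  intros Hi. destruct (proj2 f_feasible i Hi) as (_ & _ & Hon & Hoff).
  rewrite length_filter_seq in Hon, Hoff.
  pose proof (nsum_b2n_negb (f i) 1 (D I)). pose proof (nsum_b2n_le (f i) 1 (D I)). lia.
Qed.

Lemma workload_system_cumulative_work : workload_system I (cumulative_work I f).
Proof.
  split; [|split; [|split]].
  - intros [|d] Hd; [lia|]. pose proof (proj1 f_feasible (S d) Hd).
    unfold cumulative_work. simpl. rewrite Nat.sub_0_r. lia.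
  - intros j Hj. rewrite <- Nat.add_assoc, cumulative_work_window.
    enough (Hsum : nsum (fun i => nsum (fun d => Nat.b2n (f i d)) (j + 1) (u_w I + 1)) 0 (N I)
                   <= nsum (fun _ => u_w I) 0 (N I)).
    { rewrite nsum_const in Hsum. unfold window_work_cap.
      replace (Nat.min (u_w I) (D I)) with (u_w I) by lia. lia. }
    apply nsum_le. intros i Hi. apply work_days_in_window_le; lia.
  - intros j Hj. rewrite <- Nat.add_assoc, cumulative_work_window.
    enough (Hsum : nsum (fun _ => 1) 0 (N I)
                   <= nsum (fun i => nsum (fun d => Nat.b2n (f i d)) (j + 1) (u_o I + 1)) 0 (N I))
      by (rewrite nsum_const in Hsum; lia).
    apply nsum_le. intros i Hi. apply work_days_in_window_pos; lia.
  - pose proof (cumulative_work_window I f 0 (D I)) as W. simpl in W. rewrite W.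
    unfold cumulative_work, total_work_min, total_work_max. simpl.
    rewrite Nat.mul_comm, (Nat.mul_comm _ (N I)), <- !(nsum_const _ 0 (N I)).
    split; apply nsum_le; intros i Hi; apply work_days_total_bounds; lia.
Qed.

End FeasibleSchedule.

Definition round_robin (I : dodosp_instance) (y : nat -> nat) : schedule :=
  fun i d => residues (N I) i (y (d - 1)) <? residues (N I) i (y d).

Section RoundRobin.
Variables (I : dodosp_instance) (y : nat -> nat).
Hypotheses (I_udodosp : udodosp_instance I) (y_workload : workload_system I y).

Let N_pos : 0 < N I.
Proof. destruct I_udodosp as [[_ [HN _]] _]. lia. Qed.

Lemma workload_system_mono p q : p <= q <= D I -> y p <= y q.
Proof.
  induction q as [|q IH]; intros Hpq; [replace p with 0 by lia; lia|].
  destruct (Nat.eq_dec p (S q)) as [->|]; [lia|].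
  pose proof (proj1 (proj1 y_workload (S q) ltac:(lia))) as Hday. simpl in Hday.
  rewrite Nat.sub_0_r in Hday. specialize (IH ltac:(lia)). lia.
Qed.

Lemma round_robin_b2n i d :
  i < N I -> 1 <= d <= D I ->
  Nat.b2n (round_robin I y i d) = residues (N I) i (y d) - residues (N I) i (y (d - 1)).
Proof.
  intros Hi Hd. destruct I_udodosp as [[_ [_ Hr]] _].
  pose proof (proj1 y_workload d Hd). specialize (Hr d Hd).
  assert (residues (N I) i (y d) <= residues (N I) i (y (d - 1)) + 1)
    by (apply residues_le_add_mul; lia).
  assert (residues (N I) i (y (d - 1)) <= residues (N I) i (y d))
    by (apply residues_mono; lia).
  unfold round_robin. destruct (Nat.ltb_spec (residues (N I) i (y (d - 1)))
                                             (residues (N I) i (y d))); simpl; lia.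
Qed.

Lemma round_robin_work_days i a n :
  i < N I -> a + n <= D I ->
  nsum (fun d => Nat.b2n (round_robin I y i d)) (a + 1) n
  = residues (N I) i (y (a + n)) - residues (N I) i (y a).
Proof.
  intros Hi. induction n as [|n IH]; intros Hn; simpl; [rewrite Nat.add_0_r; lia|].
  rewrite IH, round_robin_b2n by lia.
  replace (a + 1 + n - 1) with (a + n) by lia. replace (a + 1 + n) with (a + S n) by lia.
  assert (residues (N I) i (y a) <= residues (N I) i (y (a + n)))
    by (apply residues_mono, workload_system_mono; lia).
  assert (residues (N I) i (y (a + n)) <= residues (N I) i (y (a + S n)))
    by (apply residues_mono, workload_system_mono; lia).
  lia.
Qed.

Lemma round_robin_num_on d : 1 <= d <= D I -> num_on I (round_robin I y) d = y d - y (d - 1).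
Proof.
  intros Hd. unfold num_on. rewrite length_filter_seq.
  rewrite (nsum_ext _ (fun i => residues (N I) i (y d) - residues (N I) i (y (d - 1))))
    by (intros; apply round_robin_b2n; lia).
  rewrite nsum_sub, !nsum_residues; auto using N_pos.
  intros i. apply residues_mono, workload_system_mono; lia.
Qed.

Lemma round_robin_periods_ok i :
  i < N I ->
  periods_ok I (round_robin I y) i true (l_w I) (u_w I) /\
  periods_ok I (round_robin I y) i false (l_o I) (u_o I).
Proof.
  intros Hi. destruct I_udodosp as [_ [-> ->]].
  split; intros a b Ha Hab Hb Hrun _ _; split; try lia.
  - destruct (Nat.le_gt_cases (b - a + 1) (u_w I)) as [|Hlong]; auto; exfalso.
    pose proof (round_robin_work_days i (a - 1) (u_w I + 1) Hi ltac:(lia)) as W.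
    rewrite nsum_b2n_all in W by (intros; apply Hrun; lia).
    pose proof (proj1 (proj2 y_workload) (a - 1) ltac:(lia)) as Hcap.
    unfold window_work_cap in Hcap. replace (Nat.min (u_w I) (D I)) with (u_w I) in Hcap by lia.
    replace (a - 1 + u_w I + 1) with (a - 1 + (u_w I + 1)) in Hcap by lia.
    assert (residues (N I) i (y (a - 1 + (u_w I + 1))) <= residues (N I) i (y (a - 1)) + u_w I)
      by (apply residues_le_add_mul; try split; try apply workload_system_mono; lia).
    lia.
  - destruct (Nat.le_gt_cases (b - a + 1) (u_o I)) as [|Hlong]; auto; exfalso.
    pose proof (round_robin_work_days i (a - 1) (u_o I + 1) Hi ltac:(lia)) as W.
    rewrite nsum_b2n_none in W by (intros; apply Hrun; lia).
    pose proof (proj1 (proj2 (proj2 y_workload)) (a - 1) ltac:(lia)) as Hmin.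
    replace (a - 1 + u_o I + 1) with (a - 1 + (u_o I + 1)) in Hmin by lia.
    assert (residues (N I) i (y (a - 1)) + 1 <= residues (N I) i (y (a - 1 + (u_o I + 1))))
      by (apply residues_ge_add_mul; lia).
    lia.
Qed.

Lemma round_robin_total_work_days i :
  i < N I ->
  D I - U_o I <= nsum (fun d => Nat.b2n (round_robin I y i d)) 1 (D I) <= Nat.min (U_w I) (D I).
Proof.
  intros Hi. pose proof (round_robin_work_days i 0 (D I) Hi ltac:(lia)) as W. simpl in W.
  rewrite W. destruct (proj2 (proj2 (proj2 y_workload))) as [Hmin Hmax].
  unfold total_work_min, total_work_max in *.
  assert (residues (N I) i (y 0) + (D I - U_o I) <= residues (N I) i (y (D I)))
    by (apply residues_ge_add_mul; lia).
  assert (residues (N I) i (y (D I)) <= residues (N I) i (y 0) + Nat.min (U_w I) (D I))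
    by (apply residues_le_add_mul; try split; try apply workload_system_mono; lia).
  lia.
Qed.

Lemma round_robin_feasible : feasible_schedule I (round_robin I y).
Proof.
  split.
  - intros d Hd. rewrite round_robin_num_on by auto.
    pose proof (proj1 y_workload d Hd). lia.
  - intros i Hi. destruct (round_robin_periods_ok i Hi) as [Hw Ho].
    pose proof (round_robin_total_work_days i Hi) as Htot.
    pose proof (nsum_b2n_negb (round_robin I y i) 1 (D I)).
    rewrite !length_filter_seq. cbv beta. refine (conj Hw (conj Ho (conj _ _))); lia.
Qed.

End RoundRobin.

Theorem feasible_iff_workload_system I :
  udodosp_instance I -> feasible I <-> exists y, workload_system I y.
Proof.
  intros HI. split.
  - intros [f Hf]. exists (cumulative_work I f). apply workload_system_cumulative_work, Hf.
  - intros [y Hy]. exists (round_robin I y). apply round_robin_feasible; auto.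
Qed.

(** * Difference constraints and relaxation *)

Record edge := Edge { src : nat; dst : nat; incr : bool; weight : nat }.

Definition shift (e : edge) (x : nat) : nat :=
  if incr e then x + weight e else x - weight e.

(* For a decreasing edge the truncated subtraction still encodes
   [y (src e) <= y (dst e) + weight e]. *)
Definition solution (E : list edge) (y : nat -> nat) : Prop :=
  forall e, In e E -> shift e (y (src e)) <= y (dst e).

Lemma shift_mono e x x' : x <= x' -> shift e x <= shift e x'.
Proof. unfold shift. destruct (incr e); lia. Qed.

Definition relax (st : (nat -> nat) * bool) (e : edge) : (nat -> nat) * bool :=
  let (x, changed) := st in
  if x (dst e) <? shift e (x (src e)) then (upd x (dst e) (shift e (x (src e))), true)
  else (x, changed).

Definition round (E : list edge) (x : nat -> nat) : (nat -> nat) * bool :=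
  fold_left relax E (x, false).

Fixpoint rounds (E : list edge) (k : nat) (st : (nat -> nat) * bool) : (nat -> nat) * bool :=
  match k with 0 => st | S k => rounds E k (round E (fst st)) end.

Lemma rounds_succ E k st : rounds E (S k) st = round E (fst (rounds E k st)).
Proof. revert st. induction k as [|k IH]; intros st; [reflexivity|]. apply IH. Qed.

Lemma relax_ge st e v : fst st v <= fst (relax st e) v.
Proof.
  destruct st as [x changed]. simpl.
  destruct (Nat.ltb_spec (x (dst e)) (shift e (x (src e)))); simpl; [|lia].
  unfold upd. destruct (Nat.eqb_spec v (dst e)); subst; lia.
Qed.

Lemma fold_relax_ge E st v : fst st v <= fst (fold_left relax E st) v.
Proof.
  revert st. induction E as [|e E' IH]; intros st; simpl; auto.
  eapply Nat.le_trans; [apply relax_ge | apply IH].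
Qed.

Lemma fold_relax_satisfies E st e :
  In e E -> shift e (fst st (src e)) <= fst (fold_left relax E st) (dst e).
Proof.
  revert st. induction E as [|e' E' IH]; intros st He; simpl in *; [tauto|].
  destruct He as [->|He].
  - eapply Nat.le_trans; [|apply fold_relax_ge].
    destruct st as [x changed]. simpl.
    destruct (Nat.ltb_spec (x (dst e)) (shift e (x (src e)))); simpl; [|lia].
    unfold upd. rewrite Nat.eqb_refl. lia.
  - eapply Nat.le_trans; [|apply IH; auto]. apply shift_mono, relax_ge.
Qed.

Lemma fold_relax_le_solution E z st :
  solution E z -> (forall v, fst st v <= z v) -> forall v, fst (fold_left relax E st) v <= z v.
Proof.
  revert st. induction E as [|e E' IH]; intros st Hz Hst; simpl; auto.
  apply IH; [intros e' He'; apply Hz; simpl; auto|].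
  intros v. destruct st as [x changed]. simpl.
  destruct (Nat.ltb_spec (x (dst e)) (shift e (x (src e)))); simpl; auto.
  unfold upd. destruct (Nat.eqb_spec v (dst e)) as [->|]; auto.
  eapply Nat.le_trans; [apply shift_mono, Hst | apply Hz; simpl; auto].
Qed.

Lemma fold_relax_changed E x : snd (fold_left relax E (x, true)) = true.
Proof.
  revert x. induction E as [|e E' IH]; intros x; simpl; auto.
  destruct (x (dst e) <? shift e (x (src e))); apply IH.
Qed.

Lemma fold_relax_unchanged E x changed :
  snd (fold_left relax E (x, changed)) = false -> solution E x.
Proof.
  revert changed. induction E as [|e E' IH]; intros changed Hsnd e' He'; simpl in *; [tauto|].
  destruct (Nat.ltb_spec (x (dst e)) (shift e (x (src e)))).
  - rewrite fold_relax_changed in Hsnd. discriminate.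
  - destruct He' as [<-|He']; auto. apply (IH changed Hsnd e' He').
Qed.

Lemma fold_relax_solution E x changed :
  solution E x -> fold_left relax E (x, changed) = (x, changed).
Proof.
  revert changed. induction E as [|e E' IH]; intros changed Hx; simpl; auto.
  destruct (Nat.ltb_spec (x (dst e)) (shift e (x (src e)))).
  - specialize (Hx e (or_introl eq_refl)). lia.
  - apply IH. intros e' He'. apply Hx. simpl. auto.
Qed.

Definition least_solution (E : list edge) (v : nat) : nat :=
  epsilon (inhabits 0) (fun n =>
    (exists z, solution E z /\ z v = n) /\ forall z, solution E z -> n <= z v).

Section LeastSolution.
Variables (E : list edge) (nmax : nat).
Hypothesis E_nodes : forall e, In e E -> src e <= nmax /\ dst e <= nmax.
Hypothesis E_solvable : exists y, solution E y.

Lemma least_solution_spec v :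
  (exists z, solution E z /\ z v = least_solution E v) /\
  (forall z, solution E z -> least_solution E v <= z v).
Proof.
  unfold least_solution. apply (epsilon_spec _ (fun n =>
    (exists z, solution E z /\ z v = n) /\ forall z, solution E z -> n <= z v)).
  destruct E_solvable as [y Hy].
  destruct (dec_inh_nat_subset_has_unique_least_element
              (fun n => exists z, solution E z /\ z v = n)) as [n [[Hn Hleast] _]].
  - intros n. apply classic.
  - eauto.
  - exists n. split; auto. intros z Hz. apply Hleast. eauto.
Qed.

Lemma least_solution_le z v : solution E z -> least_solution E v <= z v.
Proof. apply least_solution_spec. Qed.

Lemma least_solution_solution : solution E (least_solution E).
Proof.
  intros e He. destruct (least_solution_spec (dst e)) as [[z [Hz <-]] _].
  eapply Nat.le_trans; [apply shift_mono, (least_solution_le z), Hz | apply Hz, He].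
Qed.

(* Otherwise lowering the least solution by one outside [R] would give a smaller solution. *)
Lemma least_solution_tight_closed (R : nat -> Prop) :
  (forall v, v <= nmax -> least_solution E v = 0 -> R v) ->
  (forall e, In e E -> R (src e) ->
     shift e (least_solution E (src e)) = least_solution E (dst e) -> R (dst e)) ->
  forall v, v <= nmax -> R v.
Proof.
  intros Hzero Htight v0 Hv0. apply NNPP. intros HR0.
  set (m := least_solution E) in *.
  set (z := fun v => if excluded_middle_informative (R v) then m v else m v - 1).
  assert (Hz : solution E z).
  { intros e He. destruct (E_nodes e He) as [Hs Hd].
    pose proof (least_solution_solution e He) as Hm. fold m in Hm.
    unfold z. destruct (excluded_middle_informative (R (dst e))) as [Rd|Rd],
                      (excluded_middle_informative (R (src e))) as [Rs|Rs].
    - exact Hm.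
    - eapply Nat.le_trans; [apply shift_mono|exact Hm]. lia.
    - assert (shift e (m (src e)) <> m (dst e)) by (intros Heq; apply Rd, Htight; auto).
      assert (m (dst e) <> 0) by (intros Heq; apply Rd, Hzero; auto). lia.
    - assert (m (dst e) <> 0) by (intros Heq; apply Rd, Hzero; auto).
      assert (m (src e) <> 0) by (intros Heq; apply Rs, Hzero; auto).
      unfold shift in *. destruct (incr e); lia. }
  pose proof (least_solution_le z v0 Hz) as Hle. fold m in Hle. unfold z in Hle.
  destruct (excluded_middle_informative (R v0)); [contradiction|].
  assert (m v0 <> 0) by (intros Heq; apply HR0, Hzero; auto). lia.
Qed.

End LeastSolution.

Definition potential (E : list edge) (k : nat) : nat -> nat :=
  fst (rounds E k (fun _ => 0, false)).

Section BellmanFord.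
Variables (E : list edge) (nmax : nat).
Hypothesis E_nodes : forall e, In e E -> src e <= nmax /\ dst e <= nmax.
Hypothesis E_solvable : exists y, solution E y.

Definition settled (k v : nat) : bool := potential E k v =? least_solution E v.

Lemma potential_succ k : potential E (S k) = fst (round E (potential E k)).
Proof. unfold potential. rewrite rounds_succ. reflexivity. Qed.

Lemma potential_le_least k v : potential E k v <= least_solution E v.
Proof.
  revert v. induction k as [|k IH]; intros v; [unfold potential; simpl; lia|].
  rewrite potential_succ. apply fold_relax_le_solution; auto.
  apply least_solution_solution. exact E_solvable.
Qed.

Lemma settled_mono k k' v : k <= k' -> settled k v = true -> settled k' v = true.
Proof.
  unfold settled. intros Hk. rewrite !Nat.eqb_eq. intros Hset.
  apply Nat.le_antisymm; [apply potential_le_least|].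
  rewrite <- Hset. clear Hset. induction Hk as [|k' Hk IH]; auto.
  rewrite IH, potential_succ. apply (fold_relax_ge E (potential E k', false)).
Qed.

Lemma settled_stable k :
  (forall v, v <= nmax -> settled (S k) v = true -> settled k v = true) ->
  forall v, v <= nmax -> settled k v = true.
Proof.
  intros Hstable. apply (least_solution_tight_closed E nmax); auto.
  - intros v Hv Hzero. unfold settled. rewrite Hzero, Nat.eqb_eq.
    pose proof (potential_le_least k v). lia.
  - intros e He Hsrc Htight. destruct (E_nodes e He) as [_ Hd].
    apply Hstable; auto. unfold settled in *. apply Nat.eqb_eq in Hsrc. apply Nat.eqb_eq.
    apply Nat.le_antisymm; [apply potential_le_least|].
    rewrite <- Htight, <- Hsrc, potential_succ. apply (fold_relax_satisfies E (potential E k, false)). exact He.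
Qed.

Lemma settled_initially : exists v, v <= nmax /\ settled 0 v = true.
Proof.
  apply NNPP. intros Hnone.
  apply (least_solution_tight_closed E nmax E_nodes E_solvable (fun _ => False)) with 0; try lia.
  intros v Hv Hzero. apply Hnone. exists v. split; auto.
  unfold settled. rewrite Hzero. reflexivity.
Qed.

Lemma settled_grows k :
  nsum (fun v => Nat.b2n (settled k v)) 0 (S nmax) < S nmax ->
  nsum (fun v => Nat.b2n (settled k v)) 0 (S nmax)
  < nsum (fun v => Nat.b2n (settled (S k) v)) 0 (S nmax).
Proof.
  intros Hpart. apply nsum_b2n_lt; [intros v _; apply settled_mono; lia|].
  apply NNPP. intros Hnone. apply (Nat.lt_irrefl (S nmax)). rewrite nsum_b2n_all in Hpart; auto.
  intros v Hv. apply settled_stable; [|lia]. intros w Hw Hset.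
  destruct (settled k w) eqn:Hk; auto. exfalso. apply Hnone. exists w. split; [lia|auto].
Qed.

Lemma settled_count k :
  Nat.min (S k) (S nmax) <= nsum (fun v => Nat.b2n (settled k v)) 0 (S nmax).
Proof.
  induction k as [|k IH].
  - destruct settled_initially as [v [Hv Hset]].
    pose proof (nsum_b2n_lt (fun _ => false) (settled 0) 0 (S nmax)) as Hlt.
    rewrite nsum_b2n_none in Hlt by auto. apply Hlt; [discriminate|].
    exists v. split; [lia|auto].
  - pose proof (nsum_b2n_le (settled k) 0 (S nmax)).
    destruct (Nat.eq_dec (nsum (fun v => Nat.b2n (settled k v)) 0 (S nmax)) (S nmax)) as [Hall|Hpart].
    + rewrite nsum_b2n_all; [lia|]. intros v Hv.
      apply (settled_mono k); [lia|]. apply (nsum_b2n_full _ _ _ Hall). lia.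
    + pose proof (settled_grows k ltac:(lia)). lia.
Qed.

Lemma potential_least k v : nmax <= k -> v <= nmax -> potential E k v = least_solution E v.
Proof.
  intros Hk Hv. apply Nat.eqb_eq. fold (settled k v). apply (settled_mono nmax); auto.
  pose proof (settled_count nmax) as Hcount. pose proof (nsum_b2n_le (settled nmax) 0 (S nmax)).
  apply (nsum_b2n_full (settled nmax) 0 (S nmax)); lia.
Qed.

End BellmanFord.

Theorem rounds_detect_solvable E nmax k :
  (forall e, In e E -> src e <= nmax /\ dst e <= nmax) -> nmax <= k ->
  snd (rounds E (S k) (fun _ => 0, false)) = false <-> exists y, solution E y.
Proof.
  intros Hnodes Hk. rewrite rounds_succ. split.
  - intros Hunchanged. eexists. eapply fold_relax_unchanged, Hunchanged.
  - intros Hsolvable. unfold round. rewrite fold_relax_solution; [reflexivity|].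
    intros e He. destruct (Hnodes e He) as [Hs Hd]. fold (potential E k).
    rewrite !(potential_least E nmax) by auto.
    apply least_solution_solution; auto.
Qed.

Definition day_edges (I : dodosp_instance) (d k : nat) : list edge :=
  flat_map (fun d => [Edge (d - 1) d true (r_l I d); Edge d (d - 1) false (r_u I d)]) (seq d k).

Definition window_edges (s1 s2 : nat) (inc : bool) (w j k : nat) : list edge :=
  map (fun j => Edge (j + s1) (j + s2) inc w) (seq j k).

Definition edges (I : dodosp_instance) : list edge :=
  day_edges I 1 (D I) ++
  window_edges (u_w I + 1) 0 false (window_work_cap I) 0 (D I - u_w I) ++
  window_edges 0 (u_o I + 1) true (N I) 0 (D I - u_o I) ++
  [Edge 0 (D I) true (total_work_min I); Edge (D I) 0 false (total_work_max I)].

Lemma In_day_edges I d0 k e :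
  In e (day_edges I d0 k) <-> exists d, d0 <= d < d0 + k /\
    (e = Edge (d - 1) d true (r_l I d) \/ e = Edge d (d - 1) false (r_u I d)).
Proof.
  unfold day_edges. rewrite in_flat_map.
  split; intros [d [Hd He]]; exists d; rewrite in_seq in *; simpl in *; intuition.
Qed.

Lemma In_window_edges s1 s2 inc w j0 k e :
  In e (window_edges s1 s2 inc w j0 k) <-> exists j, j0 <= j < j0 + k /\ e = Edge (j + s1) (j + s2) inc w.
Proof.
  unfold window_edges. rewrite in_map_iff.
  split; intros [j [Hj He]]; exists j; rewrite in_seq in *; auto.
Qed.

Lemma In_edges I e :
  In e (edges I) <->
  (exists d, 1 <= d <= D I /\
     (e = Edge (d - 1) d true (r_l I d) \/ e = Edge d (d - 1) false (r_u I d))) \/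
  (exists j, j + u_w I + 1 <= D I /\ e = Edge (j + u_w I + 1) j false (window_work_cap I)) \/
  (exists j, j + u_o I + 1 <= D I /\ e = Edge j (j + u_o I + 1) true (N I)) \/
  e = Edge 0 (D I) true (total_work_min I) \/ e = Edge (D I) 0 false (total_work_max I).
Proof.
  unfold edges. rewrite !in_app_iff, In_day_edges, !In_window_edges. simpl.
  setoid_rewrite Nat.add_0_r. setoid_rewrite Nat.add_assoc.
  split.
  - intros [[d [Hd He]] | [[j [Hj He]] | [[j [Hj He]] | [He | [He | []]]]]];
      [left | right; left | right; right; left | do 3 right; left | do 4 right];
      try (eexists; split; [|exact He]); auto; lia.
  - intros [[d [Hd He]] | [[j [Hj He]] | [[j [Hj He]] | [He | He]]]];
      [left | right; left | right; right; left | do 3 right; left | do 4 right; left];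
      try (eexists; split; [|exact He]); auto; lia.
Qed.

Lemma edges_nodes I e : In e (edges I) -> src e <= D I /\ dst e <= D I.
Proof.
  rewrite In_edges.
  intros [[d [Hd [-> | ->]]] | [[j [Hj ->]] | [[j [Hj ->]] | [-> | ->]]]]; simpl; lia.
Qed.

Lemma solution_edges_iff I y : solution (edges I) y <-> workload_system I y.
Proof.
  unfold solution. setoid_rewrite In_edges. split.
  - intros Hsol. split; [|split; [|split; [|split]]].
    + intros d Hd. pose proof (Hsol _ (or_introl (ex_intro _ d (conj Hd (or_introl eq_refl))))).
      pose proof (Hsol _ (or_introl (ex_intro _ d (conj Hd (or_intror eq_refl))))).
      unfold shift in *. simpl in *. lia.
    + intros j Hj. pose proof (Hsol _ (or_intror (or_introl (ex_intro _ j (conj Hj eq_refl))))).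
      unfold shift in *. simpl in *. lia.
    + intros j Hj.
      apply (Hsol _ (or_intror (or_intror (or_introl (ex_intro _ j (conj Hj eq_refl)))))).
    + apply (Hsol _ (or_intror (or_intror (or_intror (or_introl eq_refl))))).
    + pose proof (Hsol _ (or_intror (or_intror (or_intror (or_intror eq_refl))))).
      unfold shift in *. simpl in *. lia.
  - intros (Hday & Hwork & Hoff & Hmin & Hmax) e.
    intros [[d [Hd [-> | ->]]] | [[j [Hj ->]] | [[j [Hj ->]] | [-> | ->]]]];
      unfold shift; simpl; try specialize (Hday d Hd); try specialize (Hwork j Hj);
      try specialize (Hoff j Hj); lia.
Qed.

Theorem feasible_iff_rounds_unchanged I k :
  udodosp_instance I -> D I <= k ->
  feasible I <-> snd (rounds (edges I) (S k) (fun _ => 0, false)) = false.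
Proof.
  intros HI Hk. rewrite feasible_iff_workload_system, rounds_detect_solvable by eauto using edges_nodes.
  split; intros [y Hy]; exists y; apply solution_edges_iff; auto.
Qed.

(** * Reasoning about RAM programs *)

Definition halts_within (P : program) (t : nat) (s : state) (R : memory -> Prop) : Prop :=
  exists m, run P t s = Some m /\ R m.

Lemma run_mono P t t' s m : t <= t' -> run P t s = Some m -> run P t' s = Some m.
Proof.
  revert t' s. induction t as [|t IH]; intros t' s Ht Hrun; simpl in Hrun;
    destruct (step P s) as [s'|] eqn:Hstep; try discriminate;
    destruct t' as [|t']; simpl; rewrite Hstep; auto; try lia.
  apply IH; auto. lia.
Qed.

Lemma halts_within_mono P t t' s R : t <= t' -> halts_within P t s R -> halts_within P t' s R.
Proof. intros Ht [m [Hrun HR]]. exists m. split; auto. apply (run_mono P t); auto. Qed.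

Lemma halts_within_step P t s s' R :
  step P s = Some s' -> halts_within P t s' R -> halts_within P (S t) s R.
Proof. intros Hstep [m [Hrun HR]]. exists m. simpl. rewrite Hstep. auto. Qed.

Lemma halts_within_halt P t pc m (R : memory -> Prop) :
  nth_error P pc = Some IHalt -> R m -> halts_within P t (pc, m) R.
Proof. intros Hhalt HR. exists m. destruct t; simpl; rewrite Hhalt; auto. Qed.

Definition code_at (P : program) (pc : nat) (c : list instr) : Prop :=
  firstn (length c) (skipn pc P) = c.

Lemma code_at_nth P pc c k i : code_at P pc c -> nth_error c k = Some i -> nth_error P (k + pc) = Some i.
Proof.
  unfold code_at. intros Hc Hk. rewrite <- Hc in Hk.
  assert (k < length c) by (apply nth_error_Some; rewrite <- Hc; congruence).
  rewrite nth_error_firstn in Hk. destruct (Nat.ltb_spec k (length c)); [|lia].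
  rewrite nth_error_skipn, Nat.add_comm in Hk. exact Hk.
Qed.

Lemma code_at_app P pc c1 c2 :
  code_at P pc (c1 ++ c2) -> code_at P pc c1 /\ code_at P (length c1 + pc) c2.
Proof.
  unfold code_at. rewrite length_app. intros Hc. split.
  - apply (f_equal (firstn (length c1))) in Hc.
    rewrite firstn_firstn, firstn_app, Nat.sub_diag, firstn_all in Hc.
    rewrite Nat.min_l, app_nil_r in Hc by lia. exact Hc.
  - apply (f_equal (skipn (length c1))) in Hc.
    rewrite skipn_app, Nat.sub_diag, skipn_all, <- firstn_skipn_comm, skipn_skipn in Hc.
    exact Hc.
Qed.

Lemma upd_same (m : memory) r v : upd m r v r = v.
Proof. unfold upd. rewrite Nat.eqb_refl. reflexivity. Qed.

Lemma upd_other (m : memory) r v x : x <> r -> upd m r v x = m x.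
Proof. intros Hx. unfold upd. destruct (Nat.eqb_spec x r); congruence. Qed.

(* Only lookups at addresses free of [upd] are rewritten, so that [lia] can compare them. *)
Ltac simpl_upd :=
  repeat match goal with
  | |- context [upd ?m ?r ?v ?x] =>
      lazymatch x with context [upd] => fail | _ => idtac end;
      first [rewrite (upd_same m r v) | rewrite (upd_other m r v x) by lia]
  end.

Section InstructionRules.
Variables (P : program) (t pc : nat) (m : memory) (R : memory -> Prop).

Ltac by_step H := intros H; apply halts_within_step; unfold step; rewrite H; reflexivity.

Lemma exec_const r n : nth_error P pc = Some (IConst r n) ->
  halts_within P t (S pc, upd m r n) R -> halts_within P (S t) (pc, m) R.
Proof. by_step H. Qed.

Lemma exec_add r a b : nth_error P pc = Some (IAdd r a b) ->
  halts_within P t (S pc, upd m r (m a + m b)) R -> halts_within P (S t) (pc, m) R.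
Proof. by_step H. Qed.

Lemma exec_sub r a b : nth_error P pc = Some (ISub r a b) ->
  halts_within P t (S pc, upd m r (m a - m b)) R -> halts_within P (S t) (pc, m) R.
Proof. by_step H. Qed.

Lemma exec_arith (inc : bool) r a b :
  nth_error P pc = Some (if inc then IAdd r a b else ISub r a b) ->
  halts_within P t (S pc, upd m r (if inc then m a + m b else m a - m b)) R ->
  halts_within P (S t) (pc, m) R.
Proof. destruct inc; by_step H. Qed.

Lemma exec_load r a : nth_error P pc = Some (ILoad r a) ->
  halts_within P t (S pc, upd m r (m (m a))) R -> halts_within P (S t) (pc, m) R.
Proof. by_step H. Qed.

Lemma exec_store a b : nth_error P pc = Some (IStore a b) ->
  halts_within P t (S pc, upd m (m a) (m b)) R -> halts_within P (S t) (pc, m) R.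
Proof. by_step H. Qed.

Lemma exec_jmp l : nth_error P pc = Some (IJmp l) ->
  halts_within P t (l, m) R -> halts_within P (S t) (pc, m) R.
Proof. by_step H. Qed.

Lemma exec_jz a l : nth_error P pc = Some (IJz a l) ->
  (m a = 0 -> halts_within P t (l, m) R) -> (m a <> 0 -> halts_within P t (S pc, m) R) ->
  halts_within P (S t) (pc, m) R.
Proof.
  intros H Hzero Hnonzero.
  apply (halts_within_step _ _ _ (if m a =? 0 then l else S pc, m));
    [unfold step; rewrite H; reflexivity|].
  destruct (Nat.eqb_spec (m a) 0); auto.
Qed.

End InstructionRules.

Ltac exec C k rule := eapply rule; [exact (code_at_nth _ _ _ k _ C eq_refl) | ..]; simpl_upd.

(* Memory layout after the setup: registers 20-32 hold the constants of [constants_loaded],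
   40 counts the remaining rounds, 41-45 are loop counters and pointers, 46 records whether
   the current round changed a potential, 47-49 are scratch; the bounds r_l d and r_u d
   sit at [bounds_base I + 2 * d] and [bounds_base I + 2 * d + 1], the potential of node v
   at [pot_base I + v]. *)
Definition pot_base (I : dodosp_instance) : nat := 4 * D I + 224.
Definition bounds_base (I : dodosp_instance) : nat := 2 * D I + 110.

Definition constants_loaded (I : dodosp_instance) (m : memory) : Prop :=
  m 20 = D I /\ m 21 = N I /\ m 22 = window_work_cap I /\ m 23 = total_work_min I /\
  m 24 = total_work_max I /\ m 25 = D I - u_w I /\ m 26 = u_w I + 1 /\ m 27 = D I - u_o I /\
  m 28 = u_o I + 1 /\ m 29 = pot_base I /\ m 30 = bounds_base I + 2 /\ m 31 = 1 /\ m 32 = 0 /\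
  forall d, 1 <= d <= D I ->
    m (bounds_base I + 2 * d) = r_l I d /\ m (bounds_base I + 2 * d + 1) = r_u I d.

Definition stores_state (I : dodosp_instance) (st : (nat -> nat) * bool) (m : memory) : Prop :=
  constants_loaded I m /\ (forall v, v <= D I -> m (pot_base I + v) = fst st v) /\
  m 46 = Nat.b2n (snd st).

Lemma constants_loaded_upd I m r x :
  constants_loaded I m -> 40 <= r <= 49 \/ pot_base I <= r -> constants_loaded I (upd m r x).
Proof.
  unfold constants_loaded, pot_base, bounds_base. intros Hc Hr.
  destruct Hc as (H20 & H21 & H22 & H23 & H24 & H25 & H26 & H27 & H28 & H29 & H30 & H31 & H32 & Hb).
  repeat split; simpl_upd; auto; apply Hb; auto.
Qed.

Lemma stores_state_upd I st m r x : stores_state I st m -> 40 <= r <= 49 -> r <> 46 -> stores_state I st (upd m r x).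
Proof.
  intros (Hc & Harr & Hflag) Hr Hr46. split; [apply constants_loaded_upd; auto|].
  unfold pot_base in *. split; [intros v Hv|]; simpl_upd; auto.
Qed.

Definition relax_code (pc : nat) (inc : bool) (pu pv wr : nat) : list instr :=
  [ILoad 47 pu; (if inc then IAdd 47 47 wr else ISub 47 47 wr); ILoad 48 pv; ISub 49 47 48;
   IJz 49 (7 + pc); IStore pv 47; IConst 46 1].

Lemma relax_code_spec I P pc e pu pv wr st m t R :
  code_at P pc (relax_code pc (incr e) pu pv wr) -> stores_state I st m ->
  m pu = pot_base I + src e -> m pv = pot_base I + dst e -> m wr = weight e ->
  src e <= D I -> dst e <= D I -> pv < 46 -> wr < 46 ->
  (forall m', stores_state I (relax st e) m' -> (forall r, r < 46 -> m' r = m r) ->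
     halts_within P t (7 + pc, m') R) ->
  halts_within P (7 + t) (pc, m) R.
Proof.
  intros C (Hc & Harr & Hflag) Hpu Hpv Hwr Hs Hd Hpv46 Hwr46 K.
  destruct st as [X changed]. simpl in Harr, Hflag.
  assert (Hbase : 224 <= pot_base I) by (unfold pot_base; lia).
  assert (Hsrc : m (m pu) = X (src e)) by (rewrite Hpu; auto).
  assert (Hdst : m (m pv) = X (dst e)) by (rewrite Hpv; auto).
  exec C 0 exec_load. exec C 1 exec_arith. exec C 2 exec_load. exec C 3 exec_sub.
  rewrite Hsrc, Hdst, Hwr. fold (shift e (X (src e))).
  exec C 4 exec_jz; intros Hcmp.
  - apply halts_within_mono with t; [lia|]. apply K.
    + unfold relax. destruct (Nat.ltb_spec (X (dst e)) (shift e (X (src e)))); [lia|].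
      repeat apply stores_state_upd; try lia. split; auto.
    + intros r Hr. simpl_upd. reflexivity.
  - exec C 5 exec_store. exec C 6 exec_const. apply K.
    + unfold relax. destruct (Nat.ltb_spec (X (dst e)) (shift e (X (src e)))); [|lia].
      split; [|split].
      * repeat apply constants_loaded_upd; auto; lia.
      * intros v Hv. simpl. rewrite Hpv.
        destruct (Nat.eq_dec v (dst e)) as [->|Hne]; simpl_upd; auto.
      * simpl_upd. reflexivity.
    + intros r Hr. simpl_upd. reflexivity.
Qed.

Definition window_loop (L : nat) (inc : bool) (wr : nat) : list instr :=
  [IJz 41 (12 + L)] ++ relax_code (1 + L) inc 42 43 wr ++
  [IAdd 42 42 31; IAdd 43 43 31; ISub 41 41 31; IJmp L].

Lemma window_loop_spec I P L inc wr s1 s2 w :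
  code_at P L (window_loop L inc wr) -> wr < 40 ->
  forall k j st m t R,
  stores_state I st m -> m wr = w -> m 41 = k ->
  m 42 = pot_base I + (j + s1) -> m 43 = pot_base I + (j + s2) ->
  (forall i, i < k -> j + i + s1 <= D I /\ j + i + s2 <= D I) ->
  (forall m', stores_state I (fold_left relax (window_edges s1 s2 inc w j k) st) m' ->
     m' 40 = m 40 -> halts_within P t (12 + L, m') R) ->
  halts_within P (k * 12 + 1 + t) (L, m) R.
Proof.
  intros C Hwr. apply code_at_app in C as [C1 C]. apply code_at_app in C as [C2 C3].
  induction k as [|k IH]; intros j st m t R Hinv Hw Hk Hsrc Hdst Hnodes K.
  - exec C1 0 exec_jz; intros Hz; [|lia]. apply K; auto.
  - replace (S k * 12 + 1 + t) with (1 + (7 + (4 + (k * 12 + 1 + t)))) by lia.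
    exec C1 0 exec_jz; intros Hnz; [lia|].
    destruct (Hnodes 0 ltac:(lia)) as [Hs Hd].
    apply (relax_code_spec I P _ (Edge (j + s1) (j + s2) inc w) 42 43 wr st m);
      cbn [src dst incr weight]; auto; try lia.
    intros m1 Hinv1 Hframe1.
    assert (H31 : m 31 = 1) by apply Hinv.
    exec C3 0 exec_add. exec C3 1 exec_add. exec C3 2 exec_sub. exec C3 3 exec_jmp.
    apply IH with (j := S j) (st := relax st (Edge (j + s1) (j + s2) inc w));
      simpl_upd; rewrite ?Hframe1 by lia; try lia.
    + repeat apply stores_state_upd; auto; lia.
    + intros i Hi. specialize (Hnodes (S i) ltac:(lia)). lia.
    + intros m' Hinv' H40. apply K; auto.
Qed.

Definition day_loop (L : nat) : list instr :=
  [IJz 41 (23 + L); ILoad 45 44] ++ relax_code (2 + L) true 42 43 45 ++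
  [IAdd 44 44 31; ILoad 45 44] ++ relax_code (11 + L) false 43 42 45 ++
  [IAdd 44 44 31; IAdd 42 42 31; IAdd 43 43 31; ISub 41 41 31; IJmp L].

Lemma day_loop_spec I P L :
  code_at P L (day_loop L) ->
  forall k d st m t R,
  stores_state I st m -> 1 <= d -> d + k <= D I + 1 -> m 41 = k ->
  m 42 = pot_base I + (d - 1) -> m 43 = pot_base I + d -> m 44 = bounds_base I + 2 * d ->
  (forall m', stores_state I (fold_left relax (day_edges I d k) st) m' -> m' 40 = m 40 ->
     halts_within P t (23 + L, m') R) ->
  halts_within P (k * 23 + 1 + t) (L, m) R.
Proof.
  intros C. apply code_at_app in C as [C1 C]. apply code_at_app in C as [C2 C].
  apply code_at_app in C as [C3 C]. apply code_at_app in C as [C4 C5].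
  induction k as [|k IH]; intros d st m t R Hinv Hd Hdk Hk Hsrc Hdst Hb K.
  - exec C1 0 exec_jz; intros Hz; [|lia]. apply K; auto.
  - replace (S k * 23 + 1 + t) with (1 + (1 + (7 + (1 + (1 + (7 + (5 + (k * 23 + 1 + t)))))))) by lia.
    assert (Hbb : 110 <= bounds_base I) by (unfold bounds_base; lia).
    assert (Hd_range : 1 <= d <= D I) by lia.
    assert (H31 : m 31 = 1) by apply Hinv.
    assert (Hlo : m (bounds_base I + 2 * d) = r_l I d) by apply (proj1 Hinv), Hd_range.
    exec C1 0 exec_jz; intros Hnz; [lia|]. exec C1 1 exec_load. rewrite Hb.
    apply (relax_code_spec I P _ (Edge (d - 1) d true (r_l I d)) 42 43 45 st);
      cbn [src dst incr weight]; try apply stores_state_upd; simpl_upd; auto; try lia.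
    intros m1 Hinv1 Hframe1.
    assert (M1 : forall r, r < 46 -> r <> 45 -> m1 r = m r)
      by (intros r Hr Hr'; rewrite Hframe1 by lia; simpl_upd; auto).
    assert (Hhi1 : m1 (bounds_base I + 2 * d + 1) = r_u I d) by apply (proj1 Hinv1), Hd_range.
    exec C3 0 exec_add. rewrite !M1, Hb, H31 by lia. exec C3 1 exec_load.
    apply (relax_code_spec I P _ (Edge d (d - 1) false (r_u I d)) 43 42 45
             (relax st (Edge (d - 1) d true (r_l I d))));
      cbn [src dst incr weight]; try (apply stores_state_upd; [apply stores_state_upd|..]);
      simpl_upd; rewrite ?Hhi1, ?M1 by lia; auto; try lia.
    intros m2 Hinv2 Hframe2.
    assert (M2 : forall r, r < 44 -> m2 r = m r)
      by (intros r Hr; rewrite Hframe2 by lia; simpl_upd; apply M1; lia).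
    assert (M2_44 : m2 44 = bounds_base I + 2 * d + 1) by (rewrite Hframe2 by lia; simpl_upd; auto).
    exec C5 0 exec_add. exec C5 1 exec_add. exec C5 2 exec_add. exec C5 3 exec_sub. exec C5 4 exec_jmp.
    rewrite ?M2_44, ?M2, ?H31 by lia.
    apply IH with (d := S d)
      (st := relax (relax st (Edge (d - 1) d true (r_l I d))) (Edge d (d - 1) false (r_u I d)));
      simpl_upd; auto; try lia.
    + repeat apply stores_state_upd; auto; lia.
    + intros m' Hinv' H40. apply K; auto. rewrite H40. simpl_upd. apply M2. lia.
Qed.


Definition relaxes (I : dodosp_instance) (P : program) (L len cost : nat) (E : list edge) : Prop :=
  forall st m t R, stores_state I st m ->
    (forall m', stores_state I (fold_left relax E st) m' -> m' 40 = m 40 ->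
       halts_within P t (len + L, m') R) ->
    halts_within P (cost + t) (L, m) R.

Lemma relaxes_app I P L len1 len2 cost1 cost2 E1 E2 :
  relaxes I P L len1 cost1 E1 -> relaxes I P (len1 + L) len2 cost2 E2 ->
  relaxes I P L (len1 + len2) (cost1 + cost2) (E1 ++ E2).
Proof.
  intros H1 H2 st m t R Hinv K. rewrite <- Nat.add_assoc.
  apply (H1 st m _ R Hinv). intros m1 Hinv1 H40. apply (H2 _ m1 _ R Hinv1).
  intros m2 Hinv2 H40'. rewrite fold_left_app in K.
  replace (len2 + (len1 + L)) with (len1 + len2 + L) by lia. apply K; congruence.
Qed.

Definition day_phase (L : nat) : list instr :=
  [IAdd 41 20 32; IAdd 42 29 32; IAdd 43 29 31; IAdd 44 30 32] ++ day_loop (4 + L).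

Lemma day_phase_spec I P L :
  code_at P L (day_phase L) -> relaxes I P L 27 (D I * 23 + 5) (day_edges I 1 (D I)).
Proof.
  intros C st m t R Hinv K. apply code_at_app in C as [C1 C2].
  destruct (proj1 Hinv) as (H20 & _ & _ & _ & _ & _ & _ & _ & _ & H29 & H30 & H31 & H32 & _).
  replace (D I * 23 + 5 + t) with (4 + (D I * 23 + 1 + t)) by lia.
  exec C1 0 exec_add. exec C1 1 exec_add. exec C1 2 exec_add. exec C1 3 exec_add.
  rewrite H20, H29, H30, H31, H32.
  apply (day_loop_spec I P _ C2 (D I) 1 st); simpl_upd; try lia.
  - repeat apply stores_state_upd; auto; lia.
  - intros m' Hinv' H40. apply K; auto.
Qed.

Definition window_phase (L rk r1 r2 : nat) (inc : bool) (wr : nat) : list instr :=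
  [IAdd 41 rk 32; IAdd 42 29 r1; IAdd 43 29 r2] ++ window_loop (3 + L) inc wr.

Lemma window_phase_spec I P L rk r1 r2 inc wr k s1 s2 w :
  code_at P L (window_phase L rk r1 r2 inc wr) -> rk < 40 -> r1 < 40 -> r2 < 40 -> wr < 40 ->
  (forall m, constants_loaded I m -> m rk = k /\ m r1 = s1 /\ m r2 = s2 /\ m wr = w) ->
  (forall i, i < k -> i + s1 <= D I /\ i + s2 <= D I) ->
  relaxes I P L 15 (k * 12 + 4) (window_edges s1 s2 inc w 0 k).
Proof.
  intros C Hrk Hr1 Hr2 Hwr Hregs Hnodes st m t R Hinv K. apply code_at_app in C as [C1 C2].
  destruct (Hregs m (proj1 Hinv)) as (Hk & Hs1 & Hs2 & Hw).
  destruct (proj1 Hinv) as (_ & _ & _ & _ & _ & _ & _ & _ & _ & H29 & _ & _ & H32 & _).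
  replace (k * 12 + 4 + t) with (3 + (k * 12 + 1 + t)) by lia.
  exec C1 0 exec_add. exec C1 1 exec_add. exec C1 2 exec_add.
  rewrite Hk, Hs1, Hs2, H29, H32.
  apply (window_loop_spec I P _ inc wr s1 s2 w C2 Hwr k 0 st); simpl_upd; auto; try lia.
  repeat apply stores_state_upd; auto; lia.
Qed.

Definition total_phase (L : nat) : list instr :=
  [IAdd 42 29 32; IAdd 43 29 20] ++ relax_code (2 + L) true 42 43 23 ++
  relax_code (9 + L) false 43 42 24.

Lemma total_phase_spec I P L :
  code_at P L (total_phase L) ->
  relaxes I P L 16 16 [Edge 0 (D I) true (total_work_min I); Edge (D I) 0 false (total_work_max I)].
Proof.
  intros C st m t R Hinv K. apply code_at_app in C as [C1 C]. apply code_at_app in C as [C2 C3].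
  destruct (proj1 Hinv) as (H20 & _ & _ & H23 & H24 & _ & _ & _ & _ & H29 & _ & _ & H32 & _).
  exec C1 0 exec_add. exec C1 1 exec_add. rewrite H20, H29, H32.
  apply (relax_code_spec I P _ (Edge 0 (D I) true (total_work_min I)) 42 43 23 st);
    cbn [src dst incr weight]; try (apply stores_state_upd; [apply stores_state_upd|..]);
    simpl_upd; auto; try lia.
  intros m1 Hinv1 Hframe1.
  apply (relax_code_spec I P _ (Edge (D I) 0 false (total_work_max I)) 43 42 24
           (relax st (Edge 0 (D I) true (total_work_min I))) m1);
    cbn [src dst incr weight]; rewrite ?Hframe1 by lia; simpl_upd; auto; try lia.
  intros m2 Hinv2 Hframe2. apply K; auto.
  rewrite Hframe2, Hframe1 by lia. simpl_upd. auto.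
Qed.

Definition relax_all_code (L : nat) : list instr :=
  day_phase L ++ window_phase (27 + L) 25 26 32 false 22 ++
  window_phase (42 + L) 27 32 28 true 21 ++ total_phase (57 + L).

Lemma relax_all_code_spec I P L :
  code_at P L (relax_all_code L) ->
  relaxes I P L 73 (D I * 23 + (D I - u_w I) * 12 + (D I - u_o I) * 12 + 29) (edges I).
Proof.
  intros C. apply code_at_app in C as [C1 C]. apply code_at_app in C as [C2 C].
  apply code_at_app in C as [C3 C4].
  replace (D I * 23 + (D I - u_w I) * 12 + (D I - u_o I) * 12 + 29)
    with (D I * 23 + 5 + ((D I - u_w I) * 12 + 4 + ((D I - u_o I) * 12 + 4 + 16))) by lia.
  change 73 with (27 + (15 + (15 + 16))).
  apply relaxes_app; [apply day_phase_spec; exact C1|].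
  apply relaxes_app; [apply (window_phase_spec I P _ 25 26 32 false 22); try exact C2; try lia|].
  - intros m (_ & _ & ? & _ & _ & ? & ? & _ & _ & _ & _ & _ & ? & _). auto.
  - apply relaxes_app; [apply (window_phase_spec I P _ 27 32 28 true 21); try exact C3; try lia|].
    + intros m (_ & ? & _ & _ & _ & _ & _ & ? & ? & _ & _ & _ & ? & _). auto.
    + apply total_phase_spec. exact C4.
Qed.

Definition round_code (L exit : nat) : list instr :=
  [IJz 40 exit; IConst 46 0] ++ relax_all_code (2 + L) ++ [ISub 40 40 31; IJmp L].

Definition round_cost (I : dodosp_instance) : nat :=
  D I * 23 + (D I - u_w I) * 12 + (D I - u_o I) * 12 + 33.

Lemma rounds_spec I P L exit :
  code_at P L (round_code L exit) ->
  forall r st m t R, stores_state I st m -> m 40 = r ->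
  (forall m', stores_state I (rounds (edges I) r st) m' -> halts_within P t (exit, m') R) ->
  halts_within P (r * round_cost I + 1 + t) (L, m) R.
Proof.
  intros C. apply code_at_app in C as [C1 C]. apply code_at_app in C as [C2 C3].
  induction r as [|r IH]; intros st m t R Hinv H40 K.
  - exec C1 0 exec_jz; intros Hz; [|lia]. apply K. exact Hinv.
  - replace (S r * round_cost I + 1 + t) with (2 + ((D I * 23 + (D I - u_w I) * 12 +
      (D I - u_o I) * 12 + 29) + (2 + (r * round_cost I + 1 + t)))) by (unfold round_cost; lia).
    exec C1 0 exec_jz; intros Hnz; [lia|]. exec C1 1 exec_const.
    apply (relax_all_code_spec I P _ C2 (fst st, false)).
    + destruct Hinv as (Hc & Harr & _). split; [apply constants_loaded_upd; auto; lia|].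
      unfold pot_base in *. split; [intros v Hv|]; simpl_upd; auto.
    + intros m1 Hinv1 H40'. simpl_upd.
      assert (H31 : m1 31 = 1) by apply Hinv1.
      exec C3 0 exec_sub. exec C3 1 exec_jmp. rewrite H40', H31. simpl_upd. rewrite H40.
      apply (IH (round (edges I) (fst st))); simpl_upd; try lia.
      * apply stores_state_upd; auto; lia.
      * intros m' Hinv'. apply K. exact Hinv'.
Qed.

Lemma init_mem_high I x : 8 <= x -> init_mem I x =
  if (12 <=? x) && (x <=? 11 + 2 * D I) then
    (if Nat.even x then r_l I ((x - 10) / 2) else r_u I ((x - 11) / 2))
  else 0.
Proof. intros Hx. do 8 (destruct x as [|x]; [lia|]). reflexivity. Qed.

Lemma init_mem_zero I x : 11 + 2 * D I < x -> init_mem I x = 0.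
Proof.
  intros Hx. rewrite init_mem_high by lia.
  replace (x <=? 11 + 2 * D I) with false by (symmetry; apply Nat.leb_gt; lia).
  rewrite andb_false_r. reflexivity.
Qed.

Lemma init_mem_bounds I d :
  1 <= d <= D I -> init_mem I (10 + 2 * d) = r_l I d /\ init_mem I (11 + 2 * d) = r_u I d.
Proof.
  intros Hd. rewrite !init_mem_high by lia.
  replace (12 <=? 10 + 2 * d) with true by (symmetry; apply Nat.leb_le; lia).
  replace (12 <=? 11 + 2 * d) with true by (symmetry; apply Nat.leb_le; lia).
  replace (10 + 2 * d <=? 11 + 2 * D I) with true by (symmetry; apply Nat.leb_le; lia).
  replace (11 + 2 * d <=? 11 + 2 * D I) with true by (symmetry; apply Nat.leb_le; lia).
  replace (10 + 2 * d - 10) with (d * 2) by lia. replace (11 + 2 * d - 11) with (d * 2) by lia.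
  rewrite Nat.div_mul by lia.
  replace (10 + 2 * d) with (2 * (5 + d)) by lia. replace (11 + 2 * d) with (1 + 2 * (5 + d)) by lia.
  rewrite Nat.even_mul, Nat.even_add_mul_2. auto.
Qed.

Definition input_copied (I : dodosp_instance) (m : memory) : Prop :=
  m 0 = D I /\ m 1 = N I /\ m 3 = u_w I /\ m 5 = u_o I /\ m 6 = U_w I /\ m 7 = U_o I /\
  (forall d, 1 <= d <= D I ->
     m (bounds_base I + 2 * d) = r_l I d /\ m (bounds_base I + 2 * d + 1) = r_u I d) /\
  (forall a, pot_base I <= a -> m a = 0).

(* The bounds arrive in cells 12..2D+11, across the work registers, so they are first
   copied above them. *)
Definition copy_loop (L : nat) : list instr :=
  [IJz 8 (7 + L); ILoad 11 9; IStore 10 11; IAdd 9 9 2; IAdd 10 10 2; ISub 8 8 2; IJmp L].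

Definition copy_code (L : nat) : list instr :=
  [IConst 2 1; IAdd 8 0 0; IConst 11 100; IAdd 10 8 11; IConst 11 12; IAdd 10 10 11;
   IConst 9 12] ++ copy_loop (7 + L).

Definition copy_inv (I : dodosp_instance) (i : nat) (m : memory) : Prop :=
  m 2 = 1 /\ m 8 = 2 * D I - i /\ m 9 = 12 + i /\ m 10 = bounds_base I + 2 + i /\
  (forall a, a < 8 -> a <> 2 -> m a = init_mem I a) /\
  (forall a, 12 <= a <= 11 + 2 * D I -> m a = init_mem I a) /\
  (forall j, j < i -> m (bounds_base I + 2 + j) = init_mem I (12 + j)) /\
  (forall a, bounds_base I + 2 + i <= a -> m a = init_mem I a).

Lemma copy_loop_spec I P L :
  code_at P L (copy_loop L) ->
  forall c i m t R, c + i = 2 * D I -> copy_inv I i m ->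
  (forall m', copy_inv I (2 * D I) m' -> halts_within P t (7 + L, m') R) ->
  halts_within P (c * 7 + 1 + t) (L, m) R.
Proof.
  intros C. induction c as [|c IH]; intros i m t R Hci Hinv K;
    destruct Hinv as (H2 & H8 & H9 & H10 & Hpar & Hsrc & Hcopied & Hrest);
    assert (Hbb : 110 <= bounds_base I) by (unfold bounds_base; lia).
  - exec C 0 exec_jz; intros Hz; [|lia]. apply K.
    replace (2 * D I) with i by lia. repeat split; auto.
  - replace (S c * 7 + 1 + t) with (7 + (c * 7 + 1 + t)) by lia.
    exec C 0 exec_jz; intros Hnz; [lia|].
    exec C 1 exec_load. exec C 2 exec_store. rewrite H10, H9. simpl_upd.
    exec C 3 exec_add. exec C 4 exec_add. exec C 5 exec_sub. exec C 6 exec_jmp.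
    rewrite H2, H8, H9, H10.
    apply (IH (S i)); [lia| |exact K].
    assert (Hsrci : m (12 + i) = init_mem I (12 + i)) by (apply Hsrc; lia).
    unfold copy_inv, bounds_base in *. rewrite Hsrci.
    repeat split; simpl_upd; try lia.
    + intros a Ha Ha2. simpl_upd. auto.
    + intros a Ha. simpl_upd. auto.
    + intros j Hj. destruct (Nat.eq_dec j i) as [->|Hne]; simpl_upd; auto.
      apply Hcopied. lia.
    + intros a Ha. simpl_upd. apply Hrest. lia.
Qed.

Lemma input_copied_of_copy_inv I m : copy_inv I (2 * D I) m -> input_copied I m.
Proof.
  unfold copy_inv, input_copied, pot_base, bounds_base.
  intros (_ & _ & _ & _ & Hpar & _ & Hcopied & Hrest).
  rewrite !Hpar by lia. do 6 (split; [reflexivity|]). split.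
  - intros d Hd. destruct (init_mem_bounds I d Hd) as [Hl Hu].
    replace (2 * D I + 110 + 2 * d) with (2 * D I + 110 + 2 + (2 * d - 2)) by lia.
    replace (2 * D I + 110 + 2 + (2 * d - 2) + 1) with (2 * D I + 110 + 2 + (2 * d - 1)) by lia.
    rewrite !Hcopied by lia.
    replace (12 + (2 * d - 2)) with (10 + 2 * d) by lia.
    replace (12 + (2 * d - 1)) with (11 + 2 * d) by lia. auto.
  - intros a Ha. rewrite Hrest by lia. apply init_mem_zero. lia.
Qed.

Lemma copy_code_spec I P L t R :
  code_at P L (copy_code L) ->
  (forall m, input_copied I m -> halts_within P t (14 + L, m) R) ->
  halts_within P (7 + (2 * D I * 7 + 1 + t)) (L, init_mem I) R.
Proof.
  intros C K. apply code_at_app in C as [C1 C2].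
  exec C1 0 exec_const. exec C1 1 exec_add. exec C1 2 exec_const. exec C1 3 exec_add.
  exec C1 4 exec_const. exec C1 5 exec_add. exec C1 6 exec_const.
  apply (copy_loop_spec I P _ C2 (2 * D I) 0); [lia| |intros m Hm; apply K, input_copied_of_copy_inv, Hm].
  unfold copy_inv, bounds_base. change (init_mem I 0) with (D I).
  repeat split; intros; simpl_upd; auto; lia.
Qed.

Definition min_code (L a : nat) : list instr :=
  [ISub 34 a 0; IJz 34 (4 + L); IAdd 33 0 32; IJmp (5 + L); IAdd 33 a 32].

Lemma min_code_spec P L a m t R :
  code_at P L (min_code L a) -> a < 32 -> m 32 = 0 ->
  halts_within P t (5 + L, upd (upd m 34 (m a - m 0)) 33 (Nat.min (m a) (m 0))) R ->
  halts_within P (4 + t) (L, m) R.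
Proof.
  intros C Ha H32 K. exec C 0 exec_sub. exec C 1 exec_jz; intros Hcmp.
  - exec C 4 exec_add. apply (halts_within_mono _ t); [lia|].
    replace (m a + m 32) with (Nat.min (m a) (m 0)) by lia. exact K.
  - exec C 2 exec_add. exec C 3 exec_jmp.
    replace (m 0 + m 32) with (Nat.min (m a) (m 0)) by lia. exact K.
Qed.

Definition mul_loop (L out : nat) : list instr :=
  [IJz 33 (4 + L); IAdd out out 21; ISub 33 33 31; IJmp L].

Lemma mul_loop_spec P L out :
  code_at P L (mul_loop L out) -> out <> 21 -> out <> 31 -> out <> 33 ->
  forall k m t R, m 33 = k -> m 31 = 1 ->
  (forall m', m' out = m out + k * m 21 -> m' 33 = 0 ->
     (forall r, r <> 33 -> r <> out -> m' r = m r) -> halts_within P t (4 + L, m') R) ->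
  halts_within P (k * 4 + 1 + t) (L, m) R.
Proof.
  intros C Hout21 Hout31 Hout33. induction k as [|k IH]; intros m t R Hk H31 K.
  - exec C 0 exec_jz; intros Hz; [|lia]. apply K; auto; lia.
  - replace (S k * 4 + 1 + t) with (4 + (k * 4 + 1 + t)) by lia.
    exec C 0 exec_jz; intros Hnz; [lia|].
    exec C 1 exec_add. exec C 2 exec_sub. exec C 3 exec_jmp.
    apply IH; simpl_upd; try lia.
    intros m' Hout' H33 Hframe. apply K; auto.
    + rewrite Hout'. lia.
    + intros r Hr Hr'. rewrite Hframe by lia. simpl_upd. reflexivity.
Qed.

Definition mul_code (L out : nat) : list instr := IConst out 0 :: mul_loop (1 + L) out.

Lemma mul_code_spec P L out k m t R :
  code_at P L (mul_code L out) -> out <> 21 -> out <> 31 -> out <> 33 -> m 31 = 1 -> m 33 = k ->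
  (forall m', m' out = k * m 21 -> m' 33 = 0 ->
     (forall r, r <> 33 -> r <> out -> m' r = m r) -> halts_within P t (5 + L, m') R) ->
  halts_within P (k * 4 + 2 + t) (L, m) R.
Proof.
  intros C Hout21 Hout31 Hout33 H31 Hk K. apply (code_at_app P L [IConst out 0]) in C as [C1 C2].
  replace (k * 4 + 2 + t) with (1 + (k * 4 + 1 + t)) by lia.
  exec C1 0 exec_const.
  apply (mul_loop_spec P _ out C2 Hout21 Hout31 Hout33 k); simpl_upd; auto.
  intros m' Hout' H33 Hframe. apply K; auto.
  intros r Hr Hr'. rewrite Hframe by lia. simpl_upd. reflexivity.
Qed.

Definition setup_code (L : nat) : list instr :=
  [IConst 32 0; IConst 31 1; IAdd 20 0 32; IAdd 21 1 32; IAdd 26 3 31; IAdd 28 5 31;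
   ISub 25 0 3; ISub 27 0 5; IAdd 30 0 0; IConst 34 112; IAdd 30 30 34; IAdd 29 30 30] ++
  min_code (12 + L) 3 ++ mul_code (17 + L) 22 ++ [ISub 33 0 7] ++ mul_code (23 + L) 23 ++
  min_code (28 + L) 6 ++ mul_code (33 + L) 24.

Lemma setup_code_spec I P L m t R :
  code_at P L (setup_code L) -> input_copied I m ->
  (forall m', constants_loaded I m' -> (forall v, v <= D I -> m' (pot_base I + v) = 0) ->
     halts_within P t (38 + L, m') R) ->
  halts_within P (12 * D I + 60 + t) (L, m) R.
Proof.
  intros C (H0 & H1 & H3 & H5 & H6 & H7 & Hbounds & Hzero) K.
  apply code_at_app in C as [C1 C]. apply code_at_app in C as [C2 C].
  apply code_at_app in C as [C3 C]. apply code_at_app in C as [C4 C].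
  apply code_at_app in C as [C5 C]. apply code_at_app in C as [C6 C7].
  assert (Hbb : 110 <= bounds_base I) by (unfold bounds_base; lia).
  assert (Hpb : 224 <= pot_base I) by (unfold pot_base; lia).
  apply (halts_within_mono _ (12 + (4 + (Nat.min (u_w I) (D I) * 4 + 2 + (1 + ((D I - U_o I) * 4 + 2 +
           (4 + (Nat.min (U_w I) (D I) * 4 + 2 + t)))))))); [lia|].
  exec C1 0 exec_const. exec C1 1 exec_const. exec C1 2 exec_add. exec C1 3 exec_add.
  exec C1 4 exec_add. exec C1 5 exec_add. exec C1 6 exec_sub. exec C1 7 exec_sub.
  exec C1 8 exec_add. exec C1 9 exec_const. exec C1 10 exec_add. exec C1 11 exec_add.
  rewrite H0, H1, H3, H5.
  apply (min_code_spec P _ 3 _ _ _ C2); simpl_upd; auto; try lia. rewrite H3, H0.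
  apply (mul_code_spec P _ 22 _ _ _ _ C3); simpl_upd; auto; try lia.
  intros m1 H22 H33 F1.
  exec C4 0 exec_sub. rewrite !F1 by lia. simpl_upd. rewrite H0, H7.
  apply (mul_code_spec P _ 23 _ _ _ _ C5); simpl_upd; rewrite ?F1 by lia; simpl_upd; auto; try lia.
  intros m2 H23 _ F2.
  apply (min_code_spec P _ 6 _ _ _ C6);
    rewrite ?F2 by lia; simpl_upd; rewrite ?F1 by lia; simpl_upd; auto; try lia.
  rewrite H6, H0.
  apply (mul_code_spec P _ 24 _ _ _ _ C7);
    simpl_upd; rewrite ?F2 by lia; simpl_upd; rewrite ?F1 by lia; simpl_upd; auto; try lia.
  intros m3 H24 _ F3.
  assert (Hm3 : forall r, 34 < r -> m3 r = m r).
  { intros r Hr. rewrite F3 by lia. simpl_upd. rewrite F2 by lia. simpl_upd.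
    rewrite F1 by lia. simpl_upd. reflexivity. }
  apply K.
  - unfold constants_loaded, window_work_cap, total_work_min, total_work_max, pot_base, bounds_base in *.
    repeat split; rewrite ?H24, ?F3 by lia; simpl_upd; rewrite ?H23, ?F2 by lia; simpl_upd;
      rewrite ?H22, ?F1 by lia; simpl_upd; rewrite ?Hm3 by lia; try lia; apply Hbounds; lia.
  - intros v Hv. rewrite Hm3 by lia. apply Hzero. lia.
Qed.

(** * The decision procedure *)

Definition answer_code (L : nat) : list instr :=
  [IJz 46 (3 + L); IConst 0 0; IHalt; IConst 0 1; IHalt].

Definition main_code (L : nat) : list instr :=
  [IAdd 40 20 31; IAdd 40 40 31; IConst 46 0] ++ round_code (3 + L) (80 + L) ++ answer_code (80 + L).

Lemma main_code_spec I P L m :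
  code_at P L (main_code L) -> udodosp_instance I -> constants_loaded I m ->
  (forall v, v <= D I -> m (pot_base I + v) = 0) ->
  halts_within P (3 + ((D I + 2) * round_cost I + 1 + 2)) (L, m) (fun m' => accepts m' <-> feasible I).
Proof.
  intros C HI Hc Hzero. apply code_at_app in C as [C1 C]. apply code_at_app in C as [C2 C3].
  assert (H31 : m 31 = 1) by apply Hc.
  exec C1 0 exec_add. exec C1 1 exec_add. exec C1 2 exec_const.
  apply (rounds_spec I P _ _ C2 (D I + 2) (fun _ => 0, false)); simpl_upd.
  - split; [repeat apply constants_loaded_upd; auto; lia|].
    unfold pot_base in *. split; [intros v Hv|]; simpl_upd; auto.
  - rewrite H31. destruct Hc as [H20 _]. lia.
  - intros m' (_ & _ & Hflag).
    pose proof (feasible_iff_rounds_unchanged I (D I + 1) HI ltac:(lia)) as Hiff.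
    replace (D I + 2) with (S (D I + 1)) in Hflag by lia.
    destruct (snd (rounds (edges I) (S (D I + 1)) (fun _ => 0, false))); simpl in Hflag.
    + exec C3 0 exec_jz; intros H46; [lia|]. exec C3 1 exec_const.
      apply halts_within_halt; [exact (code_at_nth _ _ _ 2 _ C3 eq_refl)|].
      unfold accepts. rewrite Hiff. simpl_upd. split; [tauto | discriminate].
    + exec C3 0 exec_jz; intros H46; [|lia]. exec C3 3 exec_const.
      apply halts_within_halt; [exact (code_at_nth _ _ _ 4 _ C3 eq_refl)|].
      unfold accepts. rewrite Hiff. simpl_upd. split; auto.
Qed.

Definition prog : program := copy_code 0 ++ setup_code 14 ++ main_code 52.

Lemma prog_spec I :
  udodosp_instance I ->
  halts_within prog (7 + (2 * D I * 7 + 1 + (12 * D I + 60 + (3 + ((D I + 2) * round_cost I + 1 + 2)))))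
    (0, init_mem I) (fun m => accepts m <-> feasible I).
Proof.
  intros HI.
  apply (copy_code_spec I prog 0); [reflexivity|]. intros m Hm.
  apply (setup_code_spec I prog 14 m); [reflexivity|auto|]. intros m' Hc Hzero.
  apply (main_code_spec I prog 52 m'); [reflexivity|auto..].
Qed.

Theorem theorem4p1 :
  exists (P : program) (c : nat),
    forall I : dodosp_instance, udodosp_instance I ->
      exists m : memory,
        run P (c * (D I * D I)) (0, init_mem I) = Some m /\
        (accepts m <-> feasible I).
Proof.
  exists prog, 400. intros I HI.
  assert (HD : 1 <= D I) by apply HI.
  assert (Hround : (D I + 2) * round_cost I <= (D I + 2) * (47 * D I + 33))
    by (apply Nat.mul_le_mono_l; unfold round_cost; lia).
  eapply halts_within_mono; [|apply prog_spec, HI]. nia.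
Qed.
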